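(* Let $X$ be a Banach lattice that has a quasi-interior point, and let $P\colon X\to X$ be a positive projection satisfying $\alpha\,\mathrm{id}_X\le P$ for some $\alpha>0$. If $B\subseteq X$ is a projection band with $P(B)\subseteq B$, then its disjoint complement $B^d$ also satisfies $P(B^d)\subseteq B^d$.
   Context: A quasi-interior point of $X$ is an element $e\in X_+$ whose generated ideal is norm dense in $X$. A positive projection is a linear $P$ with $P^2=P$ and $P(X_+)\subseteq X_+$. $\alpha\,\mathrm{id}_X\le P$ means $Px\ge\alpha x$ for all $x\in X_+$. $B^d=\{x\in X: |x|\wedge|b|=0 \text{ for all } b\in B\}$. *)

From HB Require Import structures.
From mathcomp Require Import all_boot all_order all_algebra.
From mathcomp Require Import all_classical all_reals all_analysis.
Set Implicit Arguments. Unset Strict Implicit. Unset Printing Implicit Defensive.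
Import Order.TTheory GRing.Theory Num.Theory.
Import numFieldNormedType.Exports.
Local Open Scope classical_set_scope.
Local Open Scope ring_scope.

Section BanachLattice.
Variables (R : realType) (V : completeNormedModType R).
Variables (le : V -> V -> Prop) (join : V -> V -> V).

Definition is_sup2 (x y z : V) : Prop :=
  le x z /\ le y z /\ forall w, le x w -> le y w -> le z w.

Definition is_supset (D : set V) (z : V) : Prop :=
  (forall d, D d -> le d z) /\ (forall w, (forall d, D d -> le d w) -> le z w).

Definition lat_abs (x : V) : V := join x (- x).
Definition lat_meet (x y : V) : V := - join (- x) (- y).

Definition banach_lattice : Prop :=
  (forall x, le x x) /\
  (forall x y, le x y -> le y x -> x = y) /\
  (forall x y z, le x y -> le y z -> le x z) /\
  (forall x y z, le x y -> le (x + z) (y + z)) /\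
  (forall (a : R) x y, 0 <= a -> le x y -> le (a *: x) (a *: y)) /\
  (forall x y, is_sup2 x y (join x y)) /\
  (forall x y, le (lat_abs x) (lat_abs y) -> `|x| <= `|y|).

Definition positive_cone : set V := [set x | le 0 x].

Definition principal_ideal (e : V) : set V :=
  [set x | exists n : nat, le (lat_abs x) (n%:R *: e)].

Definition quasi_interior_point (e : V) : Prop :=
  le 0 e /\ closure (principal_ideal e) = setT.

Definition disjoint_complement (B : set V) : set V :=
  [set x | forall b, B b -> lat_meet (lat_abs x) (lat_abs b) = 0].

Definition is_ideal (B : set V) : Prop :=
  [/\ B 0, (forall x y, B x -> B y -> B (x + y)),
      (forall (a : R) x, B x -> B (a *: x)) &
      (forall x y, B y -> le (lat_abs x) (lat_abs y) -> B x)].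

Definition is_band (B : set V) : Prop :=
  is_ideal B /\ (forall D z, D `<=` B -> is_supset D z -> B z).

Definition projection_band (B : set V) : Prop :=
  is_band B /\
  forall x, exists b c, [/\ B b, disjoint_complement B c & x = b + c].

Definition positive_projection (P : V -> V) : Prop :=
  [/\ (forall (a : R) x y, P (a *: x + y) = a *: P x + P y),
      (forall x, P (P x) = P x) &
      (forall x, le 0 x -> le 0 (P x))].

End BanachLattice.

From HB Require Import structures.
From mathcomp Require Import all_boot all_order all_algebra.
From mathcomp Require Import all_classical all_reals all_analysis.
Import Order.TTheory GRing.Theory Num.Theory.
Import numFieldNormedType.Exports.
Local Open Scope classical_set_scope.
Local Open Scope ring_scope.

Set Implicit Arguments.
Unset Strict Implicit.

(* Since B is a
   projection band, every element splits uniquely as b + c with b in B and c in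
   B^d, and b + c >= 0 forces b, c >= 0. For 0 <= y in B^d write P y = b + c.
   Idempotence and P(B) in B show that P c - c lies in B; as P c >= 0 this
   difference is positive, and P kills it, so alpha id <= P makes it zero:
   P c = c. Then P y - alpha y = b + (c - alpha y) >= 0 gives c - alpha y >= 0,
   and applying P yields -alpha b + (c - alpha c) >= 0, so -alpha b >= 0 and
   b = 0. Hence P y = c lies in B^d, and writing x = (x + |x|) - |x| handles
   arbitrary x in B^d. *)

Section VectorLattice.
Context {R : realType} {V : completeNormedModType R}
  {le : V -> V -> Prop} {join : V -> V -> V} (HBL : banach_lattice le join).

Local Notation abs := (lat_abs join).
Local Notation meet := (lat_meet join).

Lemma vl_refl x : le x x.
Proof. by case: HBL => + _; apply. Qed.

Lemma vl_anti x y : le x y -> le y x -> x = y.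
Proof. by case: HBL => _ [+ _]; apply. Qed.

Lemma vl_trans y x z : le x y -> le y z -> le x z.
Proof. by case: HBL => _ [_ [+ _]]; apply. Qed.

Lemma vl_addr z x y : le x y -> le (x + z) (y + z).
Proof. by case: HBL => _ [_ [_ [+ _]]]; apply. Qed.

Lemma vl_scale (a : R) x y : 0 <= a -> le x y -> le (a *: x) (a *: y).
Proof. by case: HBL => _ [_ [_ [_ [+ _]]]]; apply. Qed.

Lemma vl_join_sup x y : is_sup2 le x y (join x y).
Proof. by case: HBL => _ [_ [_ [_ [_ [+ _]]]]]; apply. Qed.

Lemma vl_joinl x y : le x (join x y).
Proof. by case: (vl_join_sup x y). Qed.

Lemma vl_joinr x y : le y (join x y).
Proof. by case: (vl_join_sup x y) => _ []. Qed.

Lemma vl_join_lub x y z : le x z -> le y z -> le (join x y) z.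
Proof. by case: (vl_join_sup x y) => _ [_]; apply. Qed.

Lemma vl_addl z x y : le x y -> le (z + x) (z + y).
Proof. by rewrite ![z + _]addrC; apply: vl_addr. Qed.

Lemma vl_add x y z t : le x y -> le z t -> le (x + z) (y + t).
Proof. by move=> /(vl_addr z) xy /(vl_addl y); apply: vl_trans xy. Qed.

Lemma vl_leBlDr x y z : le (x - y) z <-> le x (z + y).
Proof.
split=> [/(vl_addr y) | /(vl_addr (- y))]; first by rewrite subrK.
by rewrite addrK.
Qed.

Lemma vl_leBrDr x y z : le x (y - z) <-> le (x + z) y.
Proof.
split=> [/(vl_addr z) | /(vl_addr (- z))]; first by rewrite subrK.
by rewrite addrK.
Qed.

Lemma vl_subr_ge0 x y : le 0 (y - x) <-> le x y.
Proof. by rewrite -[x in le x y]add0r; apply: vl_leBrDr. Qed.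

Lemma vl_opp x y : le x y -> le (- y) (- x).
Proof.
by move=> xy; apply/vl_subr_ge0; rewrite opprK addrC; apply/vl_subr_ge0.
Qed.

Lemma vl_leDl x a : le 0 a -> le x (x + a).
Proof. by move/(vl_addl x); rewrite addr0. Qed.

Lemma vl_scale_monoL (s t : R) x : 0 <= s -> s <= t -> le 0 x ->
  le (s *: x) (t *: x).
Proof.
move=> s0 st x0; apply/vl_subr_ge0; rewrite -scalerBl -(scaler0 _ (t - s)).
by apply: vl_scale; rewrite ?subr_ge0.
Qed.

Lemma vl_scale_eq0 (a : R) x : 0 < a -> le 0 x -> le (a *: x) 0 -> x = 0.
Proof.
move=> a0 x0 ax0; have /eqP : a *: x = 0.
  by apply: vl_anti ax0 _; rewrite -(scaler0 _ a); apply: vl_scale (ltW a0) x0.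
by rewrite scaler_eq0 (gt_eqF a0) => /eqP.
Qed.

Lemma vl_abs_ge x : le x (abs x).
Proof. exact: vl_joinl. Qed.

Lemma vl_abs_geN x : le (- x) (abs x).
Proof. exact: vl_joinr. Qed.

Lemma vl_abs_ge0 x : le 0 (abs x).
Proof.
have := vl_add (vl_abs_ge x) (vl_abs_geN x); rewrite subrr.
move/(vl_scale (a := 2^-1)).
rewrite scaler0 scalerDr -scalerDl -[2^-1]mul1r -splitr scale1r.
by apply; rewrite mul1r invr_ge0.
Qed.

Lemma vl_abs_id x : le 0 x -> abs x = x.
Proof.
move=> x0; apply: vl_anti (vl_abs_ge x).
apply: vl_join_lub (vl_refl x) _.
by apply: (vl_trans _ x0); rewrite -oppr0; apply: vl_opp.
Qed.

Lemma vl_absN x : abs (- x) = abs x.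
Proof.
apply: vl_anti; apply: vl_join_lub.
- exact: vl_abs_geN.
- by rewrite opprK; apply: vl_abs_ge.
- by rewrite -{1}(opprK x); apply: vl_abs_geN.
- exact: vl_abs_ge.
Qed.

Lemma vl_abs_add x y : le (abs (x + y)) (abs x + abs y).
Proof.
apply: vl_join_lub; rewrite ?opprD; apply: vl_add;
  by [apply: vl_abs_ge | apply: vl_abs_geN].
Qed.

Lemma vl_abs_le0 x : le (abs x) 0 -> x = 0.
Proof.
move=> x0; apply: vl_anti; first exact: vl_trans (vl_abs_ge x) x0.
by rewrite -oppr0 -(opprK x); apply/vl_opp/(vl_trans (vl_abs_geN x)).
Qed.

Lemma vl_abs_scale (s : R) x : 0 <= s -> s <= 1 -> le (abs (s *: x)) (abs x).
Proof.
move=> s0 s1; have sabs : le (s *: abs x) (abs x).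
  by rewrite -{2}(scale1r (abs x)); apply: vl_scale_monoL (vl_abs_ge0 x).
apply: vl_join_lub; apply: vl_trans _ sabs; rewrite -?scalerN;
  apply: vl_scale s0 _; [exact: vl_abs_ge | exact: vl_abs_geN].
Qed.

Lemma vl_abs_negpart x : le (abs (join (- x) 0)) (abs x).
Proof.
rewrite vl_abs_id; last exact: vl_joinr.
exact: vl_join_lub (vl_abs_geN x) (vl_abs_ge0 x).
Qed.

Lemma vl_meetl x y : le (meet x y) x.
Proof. by rewrite -{2}(opprK x); apply/vl_opp/vl_joinl. Qed.

Lemma vl_meetr x y : le (meet x y) y.
Proof. by rewrite -{2}(opprK y); apply/vl_opp/vl_joinr. Qed.

Lemma vl_meet_glb x y z : le z x -> le z y -> le z (meet x y).
Proof.
by move=> zx zy; rewrite -(opprK z); apply/vl_opp/vl_join_lub; apply: vl_opp.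
Qed.

Lemma vl_meetC x y : meet x y = meet y x.
Proof.
by apply: vl_anti; apply: vl_meet_glb;
  first [exact: vl_meetl | exact: vl_meetr].
Qed.

Lemma vl_meet_abs_ge0 x y : le 0 (meet (abs x) (abs y)).
Proof. exact: vl_meet_glb (vl_abs_ge0 x) (vl_abs_ge0 y). Qed.

Lemma vl_meet_monol x x' y : le x x' -> le (meet x y) (meet x' y).
Proof.
by move=> xx'; apply: vl_meet_glb (vl_trans (vl_meetl x y) xx') (vl_meetr x y).
Qed.

Lemma vl_joinDr x y z : join x y + z = join (x + z) (y + z).
Proof.
apply: vl_anti.
  apply/vl_leBrDr/vl_join_lub; apply/vl_leBrDr;
    [exact: vl_joinl | exact: vl_joinr].
by apply: vl_join_lub; apply: vl_addr; [apply: vl_joinl | apply: vl_joinr].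
Qed.

(* (a + b) /\ w - a /\ w = ((a + b) /\ w - a) \/ ((a + b) /\ w - w), and both
   terms lie below b and below w. *)
Lemma vl_meet_addl a b w : le 0 a -> le 0 b -> le 0 w ->
  le (meet (a + b) w) (meet a w + meet b w).
Proof.
move=> a0 b0 w0; set z := meet (a + b) w.
have zab : le z (a + b) := vl_meetl _ _.
have zw : le z w := vl_meetr _ _.
have zw0 : le (z - w) 0 by apply/vl_leBlDr; rewrite add0r.
rewrite addrC; apply/vl_leBlDr.
rewrite [z - _]addrC /lat_meet opprK vl_joinDr ![_ + z]addrC.
apply: vl_meet_glb; apply: vl_join_lub.
- by apply/vl_leBlDr; rewrite addrC.
- exact: vl_trans zw0 b0.
- by apply: vl_trans _ zw; apply/vl_leBlDr/vl_leDl.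
- exact: vl_trans zw0 w0.
Qed.

Lemma vl_ge0_negpart_disjoint b c :
  le 0 (b + c) -> meet (abs c) (abs (join (- b) 0)) = 0 -> le 0 b.
Proof.
move=> bc0; rewrite [abs (join _ _)]vl_abs_id => [disj|]; last exact: vl_joinr.
have nc : le (- b) c by apply/vl_subr_ge0; rewrite opprK addrC.
have : le (join (- b) 0) (meet (abs c) (join (- b) 0)).
  apply: vl_meet_glb _ (vl_refl _).
  exact: vl_join_lub (vl_trans nc (vl_abs_ge c)) (vl_abs_ge0 c).
rewrite disj => n0.
by rewrite -oppr0 -(opprK b); apply/vl_opp; apply: vl_trans (vl_joinl _ _) n0.
Qed.

Section DisjointComplement.
Context {B : set V}.

Local Notation Bd := (disjoint_complement join B).

Lemma dcomp_solid c x : Bd c -> le (abs x) (abs c) -> Bd x.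
Proof.
move=> Bdc xc b Bb; apply: vl_anti (vl_meet_abs_ge0 _ _).
by rewrite -(Bdc b Bb); apply: vl_meet_monol.
Qed.

Lemma dcomp_add c1 c2 : Bd c1 -> Bd c2 -> Bd (c1 + c2).
Proof.
move=> Bdc1 Bdc2 b Bb; apply: vl_anti (vl_meet_abs_ge0 _ _).
apply: vl_trans (vl_meet_monol _ (vl_abs_add c1 c2)) _.
apply: vl_trans (vl_meet_addl (vl_abs_ge0 _) (vl_abs_ge0 _) (vl_abs_ge0 _)) _.
by rewrite (Bdc1 b Bb) (Bdc2 b Bb) addr0; apply: vl_refl.
Qed.

Lemma dcomp_opp c : Bd c -> Bd (- c).
Proof.
by move=> Bdc; apply: dcomp_solid Bdc _; rewrite vl_absN; apply: vl_refl.
Qed.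

Lemma dcomp_scale (s : R) c : 0 <= s -> s <= 1 -> Bd c -> Bd (s *: c).
Proof. by move=> s0 s1 Bdc; apply: dcomp_solid Bdc (vl_abs_scale c s0 s1). Qed.

Lemma dcomp_abs c : Bd c -> Bd (abs c).
Proof.
move=> Bdc; apply: dcomp_solid Bdc _.
by rewrite vl_abs_id; [apply: vl_refl | apply: vl_abs_ge0].
Qed.

Lemma band_dcomp_eq0 x : B x -> Bd x -> x = 0.
Proof.
move=> Bx Bdx; apply: vl_abs_le0.
by rewrite -(Bdx x Bx); apply: vl_meet_glb; apply: vl_refl.
Qed.

Hypothesis HBi : is_ideal le join B.

Lemma ideal_add x y : B x -> B y -> B (x + y).
Proof. by case: HBi => _ + _ _; apply. Qed.

Lemma ideal_scale (a : R) x : B x -> B (a *: x).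
Proof. by case: HBi => _ _ + _; apply. Qed.

Lemma ideal_opp x : B x -> B (- x).
Proof. by rewrite -scaleN1r; apply: ideal_scale. Qed.

Lemma ideal_solid x y : B y -> le (abs x) (abs y) -> B x.
Proof. by case: HBi => _ _ _; apply. Qed.

Lemma band_decomp_uniq b1 c1 b2 c2 : B b1 -> Bd c1 -> B b2 -> Bd c2 ->
  b1 + c1 = b2 + c2 -> b1 = b2 /\ c1 = c2.
Proof.
move=> Bb1 Bdc1 Bb2 Bdc2 e.
have e2 : b1 - b2 = c2 - c1.
  by rewrite -[b1](addrK c1) e addrAC [b2 + c2]addrC addrK.
have /eqP : b1 - b2 = 0.
  apply: band_dcomp_eq0; first exact: ideal_add Bb1 (ideal_opp Bb2).
  by rewrite e2; apply: dcomp_add Bdc2 (dcomp_opp Bdc1).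
rewrite subr_eq0 => /eqP eb; split => //.
by move: e; rewrite eb => /addrI.
Qed.

Lemma band_decomp_ge0 b c : B b -> Bd c -> le 0 (b + c) -> le 0 b /\ le 0 c.
Proof.
move=> Bb Bdc bc0; split.
  apply: vl_ge0_negpart_disjoint bc0 _.
  exact: Bdc _ (ideal_solid Bb (vl_abs_negpart b)).
rewrite addrC in bc0; apply: vl_ge0_negpart_disjoint bc0 _.
by rewrite vl_meetC; apply: (dcomp_solid Bdc (vl_abs_negpart c)).
Qed.

Hypothesis Hsplit : forall x, exists b c, [/\ B b, Bd c & x = b + c].

Section PositiveProjection.
Context {P : V -> V} (HP : positive_projection le P).

Lemma proj_add x y : P (x + y) = P x + P y.
Proof. by case: HP => + _ _ => /(_ 1 x y); rewrite !scale1r. Qed.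

Lemma proj0 : P 0 = 0.
Proof.
by case: HP => + _ _ => /(_ (-1) 0 0); rewrite scaler0 add0r scaleN1r addNr.
Qed.

Lemma projZ (a : R) x : P (a *: x) = a *: P x.
Proof. by case: HP => + _ _ => /(_ a x 0); rewrite !addr0 proj0 addr0. Qed.

Lemma proj_sub x y : P (x - y) = P x - P y.
Proof. by rewrite proj_add -scaleN1r projZ scaleN1r. Qed.

Lemma proj_idem x : P (P x) = P x.
Proof. by case: HP. Qed.

Lemma proj_ge0 x : le 0 x -> le 0 (P x).
Proof. by case: HP => _ _; apply. Qed.

Hypothesis HPB : forall x, B x -> B (P x).

Lemma band_proj_dcomp_part_sub y b c :
  B b -> Bd c -> P y = b + c -> B (P c - c).
Proof.
move=> Bb Bdc Py; have [b' [c' [Bb' Bdc' Pc]]] := Hsplit (P c).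
have [_ c'c] : P b + b' = b /\ c' = c.
  apply: band_decomp_uniq => //; first exact: ideal_add (HPB Bb) Bb'.
  by rewrite -addrA -Pc -proj_add -Py proj_idem.
by rewrite Pc c'c addrK.
Qed.

Context {alpha : R}.
Hypotheses (alpha_gt0 : 0 < alpha) (alpha_le1 : alpha <= 1).
Hypothesis HaP : forall x, le 0 x -> le (alpha *: x) (P x).

Lemma proj_ge0_eq0 x : le 0 x -> P x = 0 -> x = 0.
Proof.
by move=> x0 Px0; apply: (vl_scale_eq0 alpha_gt0 x0); rewrite -Px0; apply: HaP.
Qed.

Lemma proj_dcomp_fix c : le 0 c -> Bd c -> B (P c - c) -> P c = c.
Proof.
move=> c0 Bdc BPc; apply/eqP; rewrite -subr_eq0; apply/eqP.
have [d0 _] : le 0 (P c - c) /\ le 0 c.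
  by apply: band_decomp_ge0 => //; rewrite subrK; apply: proj_ge0.
by apply: proj_ge0_eq0 d0 _; rewrite proj_sub proj_idem subrr.
Qed.

Lemma proj_band_part_eq0 y b c : le 0 y -> Bd y -> B b -> Bd c ->
  P y = b + c -> P c = c -> b = 0.
Proof.
move=> y0 Bdy Bb Bdc Py Pc.
have [b0 _] := band_decomp_ge0 Bb Bdc (eq_ind _ (le 0) (proj_ge0 y0) _ Py).
have Bd_cy : Bd (c - alpha *: y).
  exact: dcomp_add Bdc (dcomp_opp (dcomp_scale (ltW alpha_gt0) alpha_le1 Bdy)).
have [_ cy0] : le 0 b /\ le 0 (c - alpha *: y).
  by apply: band_decomp_ge0 => //; rewrite addrA -Py; apply/vl_subr_ge0/HaP.
have := proj_ge0 cy0.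
rewrite proj_sub projZ Pc Py scalerDr opprD addrCA => Pcy0.
have [ab0 _] := band_decomp_ge0 (ideal_opp (ideal_scale alpha Bb))
  (dcomp_add Bdc (dcomp_opp (dcomp_scale (ltW alpha_gt0) alpha_le1 Bdc))) Pcy0.
apply: vl_scale_eq0 alpha_gt0 b0 _.
by rewrite -oppr0 -(opprK (alpha *: b)); apply: vl_opp.
Qed.

Lemma proj_dcomp_ge0 y : le 0 y -> Bd y -> Bd (P y).
Proof.
move=> y0 Bdy; have [b [c [Bb Bdc Py]]] := Hsplit (P y).
have [_ c0] := band_decomp_ge0 Bb Bdc (eq_ind _ (le 0) (proj_ge0 y0) _ Py).
have Pc := proj_dcomp_fix c0 Bdc (band_proj_dcomp_part_sub Bb Bdc Py).
by rewrite Py (proj_band_part_eq0 y0 Bdy Bb Bdc Py Pc) add0r.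
Qed.

Lemma proj_dcomp x : Bd x -> Bd (P x).
Proof.
move=> Bdx; have Bd_absx := dcomp_abs Bdx.
have -> : P x = P (x + abs x) - P (abs x) by rewrite -proj_sub addrK.
apply: dcomp_add; last apply: dcomp_opp; apply: proj_dcomp_ge0 => //.
- by rewrite -[x in x + _]opprK addrC; apply/vl_subr_ge0/vl_abs_geN.
- exact: dcomp_add.
- exact: vl_abs_ge0.
Qed.

End PositiveProjection.
End DisjointComplement.
End VectorLattice.

Theorem lemma2p3 (R : realType) (V : completeNormedModType R)
    (le : V -> V -> Prop) (join : V -> V -> V)
    (HBL : banach_lattice le join)
    (Hqip : exists e : V, quasi_interior_point le join e)
    (P : V -> V) (HP : positive_projection le P)
    (alpha : R) (Halpha : 0 < alpha)
    (HaP : forall x, le 0 x -> le (alpha *: x) (P x))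
    (B : set V) (HB : projection_band le join B)
    (HPB : forall x, B x -> B (P x)) :
  forall x, disjoint_complement join B x -> disjoint_complement join B (P x).
Proof.
case: HB => [[HBi _] Hsplit].
have min_gt0 : 0 < Num.min alpha 1 by rewrite lt_min Halpha ltr01.
have min_le1 : Num.min alpha 1 <= 1 by rewrite ge_min lexx orbT.
have HminP x : le 0 x -> le (Num.min alpha 1 *: x) (P x).
  move=> x0; apply: (vl_trans HBL _ (HaP x x0)).
  by apply: (vl_scale_monoL HBL); rewrite ?ge_min ?lexx ?(ltW min_gt0).
exact: (proj_dcomp HBL HBi Hsplit HP HPB min_gt0 min_le1 HminP).
Qed.
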